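(* There is no six-qubit stabilizer code encoding one qubit that has CSS structure and corrects an arbitrary single-qubit error. That is, there do not exist five independent, pairwise commuting operators $g_1,\dots,g_5$ in the six-qubit Pauli group, each of which is a tensor product of only $X$ and $I$ factors or only of $Z$ and $I$ factors (up to sign), such that the group $S=\langle g_1,\dots,g_5\rangle$ satisfies: for every pair $E_a,E_b\in\{I\}\cup\{X_i,Y_i,Z_i:i=1,\dots,6\}$, the operator $E_a^\dagger E_b$ either anticommutes with some element of $S$ or lies in $S$ up to phase.
   Context: $X,Y,Z$ are the single-qubit Pauli matrices and $P_i$ denotes the operator acting as $P$ on qubit $i$ and as identity elsewhere. Generators are independent if none is, up to phase, a product of the others. *)

From mathcomp Require Import all_boot.
Set Implicit Arguments. Unset Strict Implicit. Unset Printing Implicit Defensive.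

Inductive P1 := PI | PX | PY | PZ.

(* product of single-qubit Paulis: a * b = i^k * c  with (k, c) = mul1 a b *)
Definition mul1 (a b : P1) : nat * P1 :=
  match a, b with
  | PI, c => (0, c)
  | c, PI => (0, c)
  | PX, PX => (0, PI) | PY, PY => (0, PI) | PZ, PZ => (0, PI)
  | PX, PY => (1, PZ) | PY, PX => (3, PZ)
  | PY, PZ => (1, PX) | PZ, PY => (3, PX)
  | PZ, PX => (1, PY) | PX, PZ => (3, PY)
  end.

(* an n-qubit Pauli operator  i^phase * (op 0) (x) ... (x) (op (n-1)) *)
Record pauli (n : nat) := Pauli { phase : nat; op : 'I_n -> P1 }.

Definition pid (n : nat) : pauli n := Pauli 0 (fun _ => PI).

Definition pmul n (p q : pauli n) : pauli n :=
  Pauli (phase p + phase q + \sum_(i < n) (mul1 (op p i) (op q i)).1)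
        (fun i => (mul1 (op p i) (op q i)).2).

(* adjoint: Pauli matrices are Hermitian, (i^k)^* = i^(3k) *)
Definition padj n (p : pauli n) : pauli n := Pauli (3 * phase p) (op p).

Definition pneg n (p : pauli n) : pauli n := Pauli (phase p + 2) (op p).

(* equality of operators (phases are mod 4) *)
Definition peq n (p q : pauli n) : Prop :=
  phase p = phase q %[mod 4] /\ forall i, op p i = op q i.

Definition eq_up_to_phase n (p q : pauli n) : Prop := forall i, op p i = op q i.

Definition pcommute n (p q : pauli n) : Prop := peq (pmul p q) (pmul q p).
Definition panticommute n (p q : pauli n) : Prop := peq (pmul p q) (pneg (pmul q p)).

Inductive in_gen n m (P : pred 'I_m) (g : 'I_m -> pauli n) : pauli n -> Prop :=
  | gen_one : in_gen P g (pid n)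
  | gen_g i : P i -> in_gen P g (g i)
  | gen_mul p q : in_gen P g p -> in_gen P g q -> in_gen P g (pmul p q).

Definition independent n m (g : 'I_m -> pauli n) : Prop :=
  forall j, ~ exists s, in_gen (fun i => i != j) g s /\ eq_up_to_phase s (g j).

(* +- tensor product of only X and I factors / only Z and I factors *)
Definition X_type n (p : pauli n) : Prop :=
  ~~ odd (phase p) /\ forall i, op p i = PI \/ op p i = PX.
Definition Z_type n (p : pauli n) : Prop :=
  ~~ odd (phase p) /\ forall i, op p i = PI \/ op p i = PZ.

Definition err n (i : 'I_n) (a : P1) : pauli n :=
  Pauli 0 (fun j => if j == i then a else PI).

Definition is_error n (E : pauli n) : Prop :=
  E = pid n \/ exists i a, a <> PI /\ E = err i a.

From mathcomp Require Import all_boot all_algebra zify.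
Set Implicit Arguments. Unset Strict Implicit. Unset Printing Implicit Defensive.
Import GRing.Theory.

(* A Pauli operator is recorded by its binary symplectic form (x | z) over F_2.
   For generators g_1..g_5 let GX and GZ be the matrices of their x- and
   z-parts.  The CSS shape gives rank GX + rank GZ <= 5 and independence gives
   >= 5.  Applied to the error pairs (Z_i, Z_j) and (X_i, X_j), the
   correction condition says that GX "detects into" GZ: every vector of weight
   one or two orthogonal to the rows of GX lies in the row space of GZ; and
   symmetrically with GX and GZ exchanged.

   For a
   matrix R, vectors of weight <= 2 orthogonal to its rows come from zero
   columns and from pairs of equal columns; together with one coordinate for
   each nonzero column value they span F_2^n.  Hence n <= rank B + 2^rank A - 1
   whenever A detects into B.  With n = 6 and rank A + rank B = 5 the two
   symmetric bounds force rank A = 2 (up to symmetry).  In that tight case all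
   three nonzero vectors of F_2^2 occur as columns of a basis of A, some column
   class has at most two coordinates, and its indicator vector is orthogonal
   to B but not in the row space of A, contradicting detection from B into A. *)

Local Open Scope ring_scope.

Lemma pchar2_F2 : (2 \in [pchar 'F_2])%N.
Proof. exact: pchar_Fp. Qed.

Lemma F2_cases (x : 'F_2) : x = 0 \/ x = 1.
Proof. by case: x => [[|[|n]] lt_x]; [left|right|]; try apply: val_inj. Qed.

Lemma addrr_F2 (x : 'F_2) : x + x = 0.
Proof. exact: addrr_pchar2 pchar2_F2 x. Qed.

Lemma natF2 k : (k%:R : 'F_2) = (odd k)%:R.
Proof. by rewrite -(Fp_nat_mod (isT : prime 2)) modn2. Qed.

Lemma natb_F2_inj (a b : bool) : (a%:R : 'F_2) = b%:R -> a = b.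
Proof. by case: a; case: b => // /eqP; rewrite ?oner_eq0 // eq_sym oner_eq0. Qed.

Lemma addmx_F2 m n (A : 'M['F_2]_(m, n)) : A + A = 0.
Proof. by apply/matrixP => i j; rewrite !mxE addrr_F2. Qed.

Lemma oppmx_F2 m n (A : 'M['F_2]_(m, n)) : - A = A.
Proof. by apply/eqP; rewrite -subr_eq0 -opprD addmx_F2 oppr0. Qed.

Lemma sum_F2_row m n (c : 'rV['F_2]_m) (v : 'I_m -> 'rV['F_2]_n) :
  c *m (\matrix_i v i) = \sum_(i | c 0 i == 1) v i.
Proof.
rewrite mulmx_sum_row [RHS]big_mkcond /=; apply: eq_bigr => i _; rewrite rowK.
by case: (F2_cases (c 0 i)) => ->; rewrite ?scale0r ?scale1r.
Qed.

Section FieldFacts.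
Variable F : fieldType.

Lemma rank_sumsmx (I : finType) (P : pred I) n (A_ : I -> 'M[F]_n) :
  (\rank (\sum_(i | P i) A_ i)%MS <= \sum_(i | P i) \rank (A_ i))%N.
Proof.
elim/big_rec2: _ => [|i r A _ IH]; first by rewrite mxrank0.
exact: leq_trans (mxrank_adds_leqif _ _).1 (leq_add (leqnn _) IH).
Qed.

Lemma orth_kermx m n (A : 'M[F]_(m, n)) (f : 'rV[F]_n) :
  (f *m A^T == 0) = (A <= kermx f^T)%MS.
Proof. by rewrite sub_kermx -trmx_eq0 trmx_mul trmxK. Qed.

Lemma orth_sub m1 m2 n (A : 'M[F]_(m1, n)) (A' : 'M[F]_(m2, n)) (f : 'rV[F]_n) :
  (A' <= A)%MS -> f *m A^T = 0 -> f *m A'^T = 0.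
Proof.
move=> sA'A /eqP; rewrite orth_kermx => /(submx_trans sA'A).
by rewrite -orth_kermx => /eqP.
Qed.

Lemma row_basis m n (A : 'M[F]_(m, n)) r :
  \rank A = r -> exists R : 'M[F]_(r, n), (R :=: A)%MS.
Proof. by move=> <-; exists (row_base A); apply: eq_row_base. Qed.

End FieldFacts.

Definition ev n (i : 'I_n) : 'rV['F_2]_n := delta_mx 0 i.

Lemma ev_mulT r n (R : 'M['F_2]_(r, n)) i : ev i *m R^T = (col i R)^T.
Proof. by rewrite tr_col -rowE. Qed.

(* Vectors of the form e_i or e_i + e_j: the binary supports of products of
   two single-qubit errors of the same type. *)
Definition low_weight n (f : 'rV['F_2]_n) : Prop :=
  (exists i, f = ev i) \/ (exists i j, f = ev i + ev j).

Definition detects m p n (A : 'M['F_2]_(m, n)) (B : 'M['F_2]_(p, n)) : Prop :=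
  forall f, low_weight f -> f *m A^T = 0 -> (f <= B)%MS.

Definition indicator n (K : {set 'I_n}) : 'rV['F_2]_n := \row_k (k \in K)%:R.

Lemma low_weight_indicator n (K : {set 'I_n}) :
  (0 < #|K| <= 2)%N -> low_weight (indicator K).
Proof.
move=> /andP[K_gt0 K_le2]; have [/eqP/cards1P[i ->] | K_ne1] := eqVneq #|K| 1%N.
  by left; exists i; apply/rowP => k; rewrite !mxE inE eq_sym.
have /cards2P[i [j [neqIJ ->]]] : #|K| == 2%N by apply/eqP; lia.
right; exists i, j; apply/rowP => k; rewrite !mxE !inE ![k == _]eq_sym.
have [<- | _] := eqVneq i k; last by rewrite add0r.
by rewrite [j == i]eq_sym (negbTE neqIJ) addr0.
Qed.

Section Columns.
Variables r n : nat.
Variable R : 'M['F_2]_(r, n).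

(* The span of the low-weight vectors orthogonal to the rows of R: the e_i
   for zero columns i and the e_i + e_j for equal columns i, j. *)
Definition low_kernel : 'M['F_2]_n :=
  (\sum_(i | col i R == 0) <<ev i>> +
   \sum_(ij : 'I_n * 'I_n | col ij.1 R == col ij.2 R) <<ev ij.1 + ev ij.2>>)%MS.

Definition col_reps : {set 'I_n} :=
  [set k | (col k R != 0) && [forall j : 'I_n, (j < k)%N ==> (col j R != col k R)]].

Definition col_class (s : 'I_n) : {set 'I_n} := [set k | col k R == col s R].

Lemma col_reps_inj : {in col_reps &, injective (fun k => col k R)}.
Proof.
move=> k l; rewrite !inE => /andP[_ /forallP minK] /andP[_ /forallP minL] /= eqKL.
apply/ord_inj/eqP; rewrite eqn_leq; apply/andP; split; rewrite leqNgt.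
  by apply: contraTN (minK l) => ->; rewrite eqKL eqxx.
by apply: contraTN (minL k) => ->; rewrite eqKL eqxx.
Qed.

Lemma col_reps_cover k : col k R != 0 -> exists2 s, s \in col_reps & col s R = col k R.
Proof.
move=> nzK.
case: (@arg_minnP _ k (fun j => col j R == col k R) val (eqxx _)) => s /eqP eqS minS.
exists s => //; rewrite inE eqS nzK /=; apply/forallP => j; apply/implyP => ltJS.
by apply: contraTN ltJS => /eqP eqJ; rewrite -leqNgt; apply: minS; rewrite /= eqJ.
Qed.

Lemma card_nonzero_cV : #|[set~ (0 : 'cV['F_2]_r)]| = (2 ^ r).-1.
Proof. by rewrite cardsC1 card_mx card_Fp // muln1. Qed.

Lemma col_reps_nonzero : (fun k => col k R) @: col_reps \subset [set~ 0].
Proof. apply/subsetP => _ /imsetP[k + ->]; by rewrite !inE => /andP[]. Qed.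

Lemma card_col_reps : (#|col_reps| <= (2 ^ r).-1)%N.
Proof.
by rewrite -card_nonzero_cV -(card_in_imset col_reps_inj) subset_leq_card ?col_reps_nonzero.
Qed.

Lemma col_reps_onto : #|col_reps| = (2 ^ r).-1 ->
  forall w : 'cV_r, w != 0 -> exists k, col k R = w.
Proof.
move=> full w nzW; have: w \in (fun k => col k R) @: col_reps.
  suff ->: (fun k => col k R) @: col_reps = [set~ 0] by rewrite !inE.
  apply/eqP; rewrite eqEcard col_reps_nonzero (card_in_imset col_reps_inj) full.
  by rewrite card_nonzero_cV /=.
by case/imsetP => k _ ->; exists k.
Qed.

(* e_k is in low_kernel when column k is zero; otherwise e_k + e_s is, for the
   representative s of its column.  So low_kernel and the e_s together span. *)
Lemma low_kernel_cover : (1%:M <= low_kernel + \sum_(s in col_reps) <<ev s>>)%MS.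
Proof.
apply/row_subP => k; rewrite row1 -/(ev k).
have [zK | nzK] := eqVneq (col k R) 0.
  apply: submx_trans (addsmxSl _ _); apply: submx_trans (addsmxSl _ _).
  by apply: (sumsmx_sup k); [apply/eqP | rewrite genmxE].
have [s repS eqS] := col_reps_cover nzK.
rewrite -[ev k](addrK (ev s)); apply: addmx_sub_adds.
  apply: submx_trans (addsmxSr _ _); apply: (sumsmx_sup (k, s)); first by rewrite /= eqS.
  by rewrite genmxE.
by rewrite eqmx_opp; apply: (sumsmx_sup s) repS _; rewrite genmxE.
Qed.

Lemma low_kernel_rank : (n <= \rank low_kernel + #|col_reps|)%N.
Proof.
have := mxrankS low_kernel_cover; rewrite mxrank1 => /leq_trans; apply.
apply: leq_trans (mxrank_adds_leqif _ _).1 _; rewrite leq_add2l.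
apply: leq_trans (rank_sumsmx _ _) _; rewrite -sum1_card.
by apply: leq_sum => s _; rewrite mxrank_gen rank_leq_row.
Qed.

(* The classes of the representatives are disjoint sets of coordinates. *)
Lemma sum_card_col_class : (\sum_(s in col_reps) #|col_class s| <= n)%N.
Proof.
under eq_bigr do rewrite -sum1dep_card.
rewrite (exchange_big_dep xpredT) //= -[n in (_ <= n)%N]card_ord -sum1_card.
apply: leq_sum => k _; rewrite sum1dep_card; apply/card_le1_eqP => s t.
rewrite !inE => /andP[repS /eqP eqS] /andP[repT /eqP eqT].
by apply: col_reps_inj; rewrite ?inE //= -eqS -eqT.
Qed.

Lemma small_col_class : (n < 3 * #|col_reps|)%N ->
  exists2 s, s \in col_reps & (#|col_class s| <= 2)%N.
Proof.
move=> few; apply/exists_inP; apply: contraLR (sum_card_col_class).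
rewrite negb_exists_in -ltnNge => /forall_inP bigClass; apply: leq_trans few _.
rewrite mulnC -sum_nat_const; apply: leq_sum => s /bigClass.
by rewrite -ltnNge.
Qed.

Lemma indicator_class_orth s : col s R != 0 -> indicator (col_class s) *m low_kernel^T = 0.
Proof.
move=> nzS; apply/eqP; rewrite orth_kermx addsmx_sub; apply/andP; split; apply/sumsmx_subP.
  move=> i /eqP zI; rewrite genmxE sub_kermx ev_mulT.
  by apply/eqP/matrixP => ? ?; rewrite !ord1 !mxE inE zI eq_sym (negbTE nzS).
move=> [i j] /eqP /= eqIJ; rewrite genmxE sub_kermx mulmxDl !ev_mulT.
by apply/eqP/matrixP => ? ?; rewrite !ord1 !mxE !inE eqIJ addrr_F2.
Qed.

(* When all nonzero vectors of F_2^r occur as columns (r >= 2), the indicator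
   of a single class is not in the row space: a vector c R is a linear
   function of the columns, but this indicator vanishes at u and u + w and
   not at w, where w is the class column and u any other nonzero vector. *)
Lemma indicator_class_notin s : (1 < r)%N -> #|col_reps| = (2 ^ r).-1 ->
  s \in col_reps -> ~~ (indicator (col_class s) <= R)%MS.
Proof.
move=> r_gt1 full repS; apply/negP => /submxP[c eqV].
have nzS : col s R != 0 by move: repS; rewrite inE => /andP[].
have linear k : indicator (col_class s) 0 k = (c *m col k R) 0 0.
  by rewrite eqV !mxE; apply: eq_bigr => i _; rewrite !mxE.
have value k : indicator (col_class s) 0 k = (col k R == col s R)%:R by rewrite !mxE inE.
have [u] : exists u : 'cV_r, u \in [set~ 0] :\ col s R.
  apply/set0Pn; rewrite -card_gt0 -(leq_add2l (col s R \in [set~ 0])) -cardsD1.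
  rewrite card_nonzero_cV !inE nzS.
  have : (4 <= 2 ^ r)%N by rewrite -[4%N]/(2 ^ 2)%N leq_pexp2l.
  move: (2 ^ r)%N => X; lia.
rewrite !inE => /andP[neqU nzU].
have nzUS : u + col s R != 0 by rewrite addr_eq0 oppmx_F2.
have [k1 colK1] := col_reps_onto full nzU.
have [k2 colK2] := col_reps_onto full nzUS.
have valU := linear k1; rewrite value colK1 (negbTE neqU) in valU.
have valS := linear s; rewrite value eqxx in valS.
have := linear k2; rewrite value colK2 -subr_eq0 addrK (negbTE nzU).
rewrite mulmxDr mxE -valU -valS add0r => /eqP.
by rewrite eq_sym oner_eq0.
Qed.

End Columns.

Lemma detects_low_kernel m p r n (A : 'M_(m, n)) (B : 'M_(p, n)) (R : 'M_(r, n)) :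
  (A <= R)%MS -> detects A B -> (low_kernel R <= B)%MS.
Proof.
move=> sAR detAB; have kerA f : f *m R^T = 0 -> f *m A^T = 0 := orth_sub sAR.
rewrite addsmx_sub; apply/andP; split; apply/sumsmx_subP.
  move=> i /eqP zI; rewrite genmxE; apply: detAB; first by left; exists i.
  by apply: kerA; rewrite ev_mulT zI trmx0.
move=> [i j] /eqP /= eqIJ; rewrite genmxE; apply: detAB; first by right; exists i, j.
by apply: kerA; rewrite mulmxDl !ev_mulT eqIJ addmx_F2.
Qed.

Lemma detects_rank m p n (A : 'M_(m, n)) (B : 'M_(p, n)) :
  detects A B -> (n <= \rank B + (2 ^ \rank A).-1)%N.
Proof.
move=> detAB; have [R eqRA] := row_basis (erefl (\rank A)).
apply: leq_trans (low_kernel_rank R) _; apply: leq_add; last exact: card_col_reps.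
by apply: mxrankS; apply: detects_low_kernel detAB; rewrite eqRA.
Qed.

Lemma detects_rank2 m p (A : 'M_(m, 6)) (B : 'M_(p, 6)) :
  \rank A = 2%N -> \rank B = 3%N -> detects A B -> detects B A -> False.
Proof.
move=> rkA rkB detAB detBA; have [R eqRA] := row_basis rkA.
have sLB : (low_kernel R <= B)%MS by apply: detects_low_kernel detAB; rewrite eqRA.
have rkL := mxrankS sLB; rewrite rkB in rkL.
have := low_kernel_rank R; have := card_col_reps R => cardR tight.
have repsR : #|col_reps R| = (2 ^ 2).-1 by move: cardR tight => /=; lia.
have sBL : (B <= low_kernel R)%MS.
  by rewrite -(mxrank_leqif_sup sLB).2 eqn_leq rkB rkL /=; move: cardR tight => /=; lia.
have [s repS smallS] : exists2 s, s \in col_reps R & (#|col_class R s| <= 2)%N.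
  by apply: small_col_class; rewrite repsR.
have nzS : col s R != 0 by move: repS; rewrite inE => /andP[].
have lowS : low_weight (indicator (col_class R s)).
  apply: low_weight_indicator; rewrite smallS andbT card_gt0.
  by apply/set0Pn; exists s; rewrite inE.
have := detBA _ lowS (orth_sub sBL (indicator_class_orth nzS)); rewrite -eqRA.
by apply/negP; apply: indicator_class_notin.
Qed.

Lemma rank_split (a b : nat) : (a + b = 5 -> 6 <= b + (2 ^ a).-1 ->
  6 <= a + (2 ^ b).-1 -> a = 2 \/ b = 2)%N.
Proof.
move=> eq5; have -> : b = (5 - a)%N by lia.
have : (a <= 5)%N by lia.
by case: a {eq5} => [|[|[|[|[|[|a]]]]]]; [ | | left | right | | | ].
Qed.

Lemma no_detecting_pair m p (A : 'M_(m, 6)) (B : 'M_(p, 6)) :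
  (\rank A + \rank B = 5)%N -> detects A B -> detects B A -> False.
Proof.
move=> rk5 detAB detBA.
have [rkA2 | rkB2] := rank_split rk5 (detects_rank detAB) (detects_rank detBA).
- by apply: (detects_rank2 rkA2) detAB detBA; move: rk5; rewrite rkA2 => -[].
- by apply: (detects_rank2 rkB2) detBA detAB; move: rk5; rewrite rkB2 addn2 => -[].
Qed.

Section PauliBinary.
Variable n : nat.
Implicit Types p q : pauli n.

Definition xb (a : P1) : bool := match a with PX | PY => true | _ => false end.
Definition zb (a : P1) : bool := match a with PZ | PY => true | _ => false end.

Definition xv p : 'rV['F_2]_n := \row_k (xb (op p k))%:R.
Definition zv p : 'rV['F_2]_n := \row_k (zb (op p k))%:R.

Lemma xv_mul p q : xv (pmul p q) = xv p + xv q.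
Proof.
apply/rowP => k; rewrite !mxE /=.
by case: (op p k); case: (op q k); rewrite /= ?addr0 ?add0r ?addrr_F2.
Qed.

Lemma zv_mul p q : zv (pmul p q) = zv p + zv q.
Proof.
apply/rowP => k; rewrite !mxE /=.
by case: (op p k); case: (op q k); rewrite /= ?addr0 ?add0r ?addrr_F2.
Qed.

Lemma xv_pid : xv (pid n) = 0. Proof. by apply/rowP => k; rewrite !mxE. Qed.
Lemma zv_pid : zv (pid n) = 0. Proof. by apply/rowP => k; rewrite !mxE. Qed.

Lemma xv_padj p : xv (padj p) = xv p. Proof. by []. Qed.
Lemma zv_padj p : zv (padj p) = zv p. Proof. by []. Qed.

Lemma xv_err i a : xv (err i a) = (xb a)%:R *: ev i.
Proof. by apply/rowP => k; rewrite !mxE /= eq_sym; case: (i == k); rewrite ?mulr1 ?mulr0. Qed.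

Lemma zv_err i a : zv (err i a) = (zb a)%:R *: ev i.
Proof. by apply/rowP => k; rewrite !mxE /= eq_sym; case: (i == k); rewrite ?mulr1 ?mulr0. Qed.

Lemma bits_inj a b : xb a = xb b -> zb a = zb b -> a = b.
Proof. by case: a; case: b. Qed.

Lemma op_eq_vec p q : xv p = xv q -> zv p = zv q -> forall k, op p k = op q k.
Proof.
move=> eqX eqZ k; apply: bits_inj; apply: natb_F2_inj.
  by have := congr1 (fun v : 'rV_n => v 0 k) eqX; rewrite !mxE.
by have := congr1 (fun v : 'rV_n => v 0 k) eqZ; rewrite !mxE.
Qed.

Lemma up_to_phase_vec p q : eq_up_to_phase p q -> xv p = xv q /\ zv p = zv q.
Proof. by move=> eqOp; split; apply/rowP => k; rewrite !mxE eqOp. Qed.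

Definition anti1 (a b : P1) : bool := (xb a && zb b) (+) (zb a && xb b).

Lemma mul1_swap a b : ((mul1 b a).1 = (mul1 a b).1 + 2 * anti1 a b %[mod 4])%N.
Proof. by case: a; case: b. Qed.

Lemma phase_swap p q : (phase (pmul q p) =
  phase (pmul p q) + 2 * \sum_(k < n) anti1 (op p k) (op q k) %[mod 4])%N.
Proof.
rewrite /= (addnC (phase q)) -!addnA; apply/eqP; rewrite !eqn_modDl; apply/eqP.
rewrite -modn_summ (eq_bigr (fun k =>
  ((mul1 (op p k) (op q k)).1 + 2 * anti1 (op p k) (op q k)) %% 4))%N.
  by rewrite modn_summ big_split /= -big_distrr.
by move=> k _; rewrite mul1_swap.
Qed.

Lemma anticommute_odd p q : panticommute p q -> odd (\sum_(k < n) anti1 (op p k) (op q k)).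
Proof.
case=> eqPh _.
have : (phase (pmul p q) = phase (pmul q p) + 2 %[mod 4])%N := eqPh.
move: (phase_swap p q); move: (phase _) (phase _) (\sum_(k < n) _)%N => x y S; lia.
Qed.

Definition symp p q : 'F_2 := (xv p *m (zv q)^T + zv p *m (xv q)^T) 0 0.

Lemma anti1_F2 a b :
  ((anti1 a b)%:R : 'F_2) = (xb a)%:R * (zb b)%:R + (zb a)%:R * (xb b)%:R.
Proof. by case: a; case: b; rewrite /= ?mulr1 ?mulr0 ?addr0 ?add0r ?addrr_F2. Qed.

Lemma anticommute_symp p q : panticommute p q -> symp p q = 1.
Proof.
move=> antiPQ; rewrite /symp !mxE -big_split /=.
rewrite (eq_bigr (fun k => (anti1 (op p k) (op q k))%:R)); last first.
  by move=> k _; rewrite anti1_F2 !mxE.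
by rewrite -natr_sum natF2 anticommute_odd.
Qed.

End PauliBinary.

Lemma low_weight_error n (a : P1) (f : 'rV['F_2]_n) : a <> PI -> low_weight f ->
  exists Ea Eb : pauli n, [/\ is_error Ea, is_error Eb,
    xv (pmul (padj Ea) Eb) = (xb a)%:R *: f & zv (pmul (padj Ea) Eb) = (zb a)%:R *: f].
Proof.
move=> nzA [[i ->] | [i [j ->]]].
  exists (pid n), (err i a); split; [by left | by right; exists i, a | |];
    by rewrite ?xv_mul ?zv_mul ?xv_padj ?zv_padj ?xv_pid ?zv_pid add0r ?xv_err ?zv_err.
exists (err i a), (err j a); split; [by right; exists i, a | by right; exists j, a | |];
  by rewrite ?xv_mul ?zv_mul ?xv_padj ?zv_padj !(xv_err, zv_err) scalerDr.
Qed.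

Section Generators.
Variables n m : nat.
Variable g : 'I_m -> pauli n.

Definition GX : 'M['F_2]_(m, n) := \matrix_i xv (g i).
Definition GZ : 'M['F_2]_(m, n) := \matrix_i zv (g i).

Lemma in_gen_vec (P : pred 'I_m) s : in_gen P g s ->
  exists c : 'rV_m, xv s = c *m GX /\ zv s = c *m GZ.
Proof.
elim=> [|i _|p q _ [c1 [xP zP]] _ [c2 [xQ zQ]]].
- by exists 0; rewrite !mul0mx xv_pid zv_pid.
- by exists (delta_mx 0 i); rewrite -!rowE !rowK.
- by exists (c1 + c2); rewrite xv_mul zv_mul xP zP xQ zQ !mulmxDl.
Qed.

(* CSS generators: each row is zero in GX or in GZ, so the kernels of GX and
   GZ together span F_2^m. *)
Lemma css_rank_le : (forall i, X_type (g i) \/ Z_type (g i)) ->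
  (\rank GX + \rank GZ <= m)%N.
Proof.
move=> css.
have cover : (1%:M <= kermx GX + kermx GZ)%MS.
  apply/row_subP => i; rewrite row1.
  case: (css i) => [[_ xI] | [_ zI]]; [apply: submx_trans (addsmxSr _ _) |
                                      apply: submx_trans (addsmxSl _ _)];
    apply/sub_kermxP; rewrite -rowE rowK; apply/rowP => k; rewrite !mxE.
    by case: (xI k) => ->.
  by case: (zI k) => ->.
have := leq_trans (mxrankS cover) (mxrank_adds_leqif _ _).1.
rewrite mxrank1 !mxrank_ker; have := rank_leq_row GX; have := rank_leq_row GZ; lia.
Qed.

Lemma kernel_dependent (c : 'rV_m) :
  c != 0 -> c *m GX = 0 -> c *m GZ = 0 -> ~ independent g.
Proof.
move=> nzC cX cZ indep.
have [j cj] : exists j, c 0 j = 1.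
  have [j nzJ] : exists j, c 0 j != 0.
    apply/existsP; apply: contraNT nzC; rewrite negb_exists => /forallP zC.
    by apply/eqP/rowP => j; rewrite mxE; apply/eqP; rewrite -[_ == _]negbK zC.
  by exists j; case: (F2_cases (c 0 j)) nzJ => ->; rewrite ?eqxx.
have sum_others v : c *m (\matrix_i v i) = 0 ->
    \sum_(i | (c 0 i == 1) && (i != j)) v i = v j :> 'rV['F_2]_n.
  rewrite sum_F2_row (bigD1 j) ?cj //= => /eqP; rewrite addr_eq0 oppmx_F2 => /eqP.
  by move->.
apply: (indep j); exists (\big[@pmul n/pid n]_(i | (c 0 i == 1) && (i != j)) g i); split.
  apply: big_ind => [|p q|i /andP[_ neqIJ]]; [exact: gen_one | exact: gen_mul | exact: gen_g].
apply: op_eq_vec.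
  by rewrite (big_morph _ (@xv_mul n) (xv_pid n)); apply: sum_others.
by rewrite (big_morph _ (@zv_mul n) (zv_pid n)); apply: sum_others.
Qed.

(* Independence: if the ranks added up to less than m, the kernels of GX and
   GZ would meet nontrivially. *)
Lemma independent_rank_ge : independent g -> (m <= \rank GX + \rank GZ)%N.
Proof.
move=> indep; rewrite leqNgt; apply/negP => small.
pose K := (kermx GX :&: kermx GZ)%MS.
have rkK : (0 < \rank K)%N.
  have := mxrank_sum_cap (kermx GX) (kermx GZ); rewrite !mxrank_ker -/K.
  have := rank_leq_col (kermx GX + kermx GZ)%MS; lia.
have [i nzI] : exists i, row i K != 0.
  apply/existsP; apply: contraTT rkK; rewrite negb_exists => /forallP zK.
  rewrite -leqNgt leqn0 mxrank_eq0; apply/eqP/row_matrixP => i.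
  by rewrite row0; apply/eqP; rewrite -[_ == _]negbK zK.
apply: (kernel_dependent nzI) indep; apply/sub_kermxP.
  exact: submx_trans (row_sub _ _) (capmxSl _ _).
exact: submx_trans (row_sub _ _) (capmxSr _ _).
Qed.

Definition corrects : Prop :=
  forall Ea Eb : pauli n, is_error Ea -> is_error Eb ->
    (exists s, in_gen predT g s /\ panticommute (pmul (padj Ea) Eb) s) \/
    (exists s, in_gen predT g s /\ eq_up_to_phase s (pmul (padj Ea) Eb)).

(* Z-type error pairs: a low-weight f orthogonal to GX gives an error with
   binary form (0 | f); it commutes with the whole group, so it is in the
   group up to phase and f lies in the row space of GZ. *)
Lemma corrects_detects_Z : corrects -> detects GX GZ.
Proof.
move=> corr f lowF orthF.
have [Ea [Eb [errA errB xE zE]]] := low_weight_error (a := PZ) (ltac:(by [])) lowF.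
rewrite scale0r in xE; rewrite scale1r in zE.
case: (corr Ea Eb errA errB) => [[s [genS antiS]] | [s [genS eqS]]].
  have := anticommute_symp antiS; have [c [xS _]] := in_gen_vec genS.
  rewrite /symp xE zE xS mul0mx add0r trmx_mul mulmxA orthF mul0mx mxE.
  by move/eqP; rewrite eq_sym oner_eq0.
have [_ zEq] := up_to_phase_vec eqS; have [c [_ zS]] := in_gen_vec genS.
by rewrite -zE -zEq zS submxMl.
Qed.

Lemma corrects_detects_X : corrects -> detects GZ GX.
Proof.
move=> corr f lowF orthF.
have [Ea [Eb [errA errB xE zE]]] := low_weight_error (a := PX) (ltac:(by [])) lowF.
rewrite scale1r in xE; rewrite scale0r in zE.
case: (corr Ea Eb errA errB) => [[s [genS antiS]] | [s [genS eqS]]].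
  have := anticommute_symp antiS; have [c [_ zS]] := in_gen_vec genS.
  rewrite /symp xE zE zS mul0mx addr0 trmx_mul mulmxA orthF mul0mx mxE.
  by move/eqP; rewrite eq_sym oner_eq0.
have [xEq _] := up_to_phase_vec eqS; have [c [xS _]] := in_gen_vec genS.
by rewrite -xE -xEq xS submxMl.
Qed.

End Generators.

Local Close Scope ring_scope.

Theorem proposition1 :
  ~ exists g : 'I_5 -> pauli 6,
      (forall i, X_type (g i) \/ Z_type (g i)) /\
      (forall i j, pcommute (g i) (g j)) /\
      independent g /\
      (forall Ea Eb : pauli 6, is_error Ea -> is_error Eb ->
         (exists s, in_gen predT g s /\ panticommute (pmul (padj Ea) Eb) s) \/
         (exists s, in_gen predT g s /\ eq_up_to_phase s (pmul (padj Ea) Eb))).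
Proof.
move=> [g [css [_ [indep corr]]]].
apply: (@no_detecting_pair _ _ (GX g) (GZ g)).
- by apply/eqP; rewrite eqn_leq css_rank_le // independent_rank_ge.
- exact: corrects_detects_Z.
- exact: corrects_detects_X.
Qed.
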